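(* For every integer $n\ge 3$, the set $\{2,n\}$ is not a $\delta$-set.
   Context: All graphs are finite and simple; $d(u,v)$ denotes the usual graph distance (infinite between different components). For a set $J$ of nonnegative integers, a distance $J$-labeling of $G$ is a function $f:V(G)\to J$ with $f(V(G))=J$ such that whenever two distinct vertices $u,v$ satisfy $f(u)=f(v)=k$, we have $d(u,v)=k$. It is proper if every $k\in J\setminus\{0\}$ is the label of at least two vertices. A finite set $\Sigma$ of nonnegative integers is a $\delta$-set if there exists a graph admitting a proper distance $\Sigma$-labeling. *)

From mathcomp Require Import all_boot.
Set Implicit Arguments. Unset Strict Implicit. Unset Printing Implicit Defensive.

Definition simple_graph (T : finType) (e : rel T) : Prop :=
  symmetric e /\ irreflexive e.

Definition walk_len (T : finType) (e : rel T) (u v : T) (k : nat) : Prop :=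
  exists p : seq T, [/\ size p = k, path e u p & last u p = v].

(* If u, v lie in different
   components, d(u,v) = infinity is equal to no natural number k. *)
Definition dist_eq (T : finType) (e : rel T) (u v : T) (k : nat) : Prop :=
  walk_len e u v k /\ (forall j, j < k -> ~ walk_len e u v j).

Definition distance_labeling (T : finType) (e : rel T) (J : seq nat)
    (f : T -> nat) : Prop :=
  (forall k, k \in J <-> exists v, f v = k) /\
  (forall u v : T, u != v -> f u = f v -> dist_eq e u v (f u)).

Definition proper_distance_labeling (T : finType) (e : rel T) (J : seq nat)
    (f : T -> nat) : Prop :=
  distance_labeling e J f /\
  (forall k, k \in J -> k != 0 -> exists u v : T, [/\ u != v, f u = k & f v = k]).

Definition delta_set (Sigma : seq nat) : Prop :=
  exists (T : finType) (e : rel T), simple_graph e /\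
    exists f : T -> nat, proper_distance_labeling e Sigma f.

From mathcomp Require Import all_boot zify.

Set Implicit Arguments.
Unset Strict Implicit.

(* Take two vertices u, v labelled n and a geodesic u = x0, x1, ..., xn = v.
   An interior vertex xi is closer than n to both u and v, so it cannot carry
   the label n and must be labelled 2.  As n >= 3, both x1 and x2 are interior;
   they are adjacent, hence at distance 1, not 2. *)

Section Walks.

Variables (T : finType) (e : rel T).

Lemma walk_len1 (u v : T) : walk_len e u v 1 <-> e u v.
Proof.
split=> [[[|x [|y p]] [] //= _ /andP[uv _] <-] | uv] //.
by exists [:: v]; rewrite /= uv.
Qed.

Lemma walk_len_cat (u w v : T) (i j : nat) :
  walk_len e u w i -> walk_len e w v j -> walk_len e u v (i + j).
Proof.
move=> [p [<- pp <-]] [q [<- qp <-]].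
by exists (p ++ q); rewrite size_cat cat_path pp qp last_cat.
Qed.

Lemma walk_len_split (u v : T) (i j : nat) :
  walk_len e u v (i + j) -> exists x, walk_len e u x i /\ walk_len e x v j.
Proof.
move=> [p [sp pp lp]]; exists (last u (take i p)).
rewrite -(cat_take_drop i p) cat_path in pp; case/andP: pp => pt pd.
split; [exists (take i p) | exists (drop i p)]; split=> //.
- by rewrite size_take_min sp; apply/minn_idPl; rewrite leq_addr.
- by rewrite size_drop sp addKn.
- by rewrite -last_cat cat_take_drop.
Qed.

End Walks.

Lemma dist_eq_leq_walk (T : finType) (e : rel T) (u v : T) (k j : nat) :
  dist_eq e u v k -> walk_len e u v j -> k <= j.
Proof. by move=> [_ kmin] w; rewrite leqNgt; apply/negP => /kmin. Qed.

Lemma distance_labeling_mem (T : finType) (e : rel T) (J : seq nat)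
    (f : T -> nat) (x : T) :
  distance_labeling e J f -> f x \in J.
Proof. by move=> [lab _]; apply/lab; exists x. Qed.

Lemma geodesic_interior_label (T : finType) (e : rel T) (J : seq nat)
    (f : T -> nat) (u v x : T) (k i j : nat) :
  distance_labeling e J f -> f u = k -> dist_eq e u v k ->
  i < k -> j < k -> walk_len e u x i -> walk_len e x v j -> f x != k.
Proof.
move=> [_ fdist] fu duv ik jk wux wxv; apply/eqP => fx.
have [xu | xu] := eqVneq x u.
  by move: wxv; rewrite xu => /(dist_eq_leq_walk duv); rewrite leqNgt jk.
have dux : dist_eq e u x k by rewrite -fu; apply: fdist; rewrite ?fx // eq_sym.
by move: (dist_eq_leq_walk dux wux); rewrite leqNgt ik.
Qed.

Theorem mainTheorem11 (n : nat) : 3 <= n -> ~ delta_set [:: 2; n].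
Proof.
move=> n3 [T [e [[_ e_irr] [f [flab fpr]]]]].
have [u [v [uv fu fv]]] : exists u v, [/\ u != v, f u = n & f v = n].
  by apply: fpr; rewrite ?inE ?eqxx ?orbT //; lia.
have duv : dist_eq e u v n by rewrite -fu; apply: flab.2; rewrite ?fu ?fv.
have wuv : walk_len e u v (1 + (1 + (n - 2))).
  by have [wuv _] := duv; rewrite -[_ + _](_ : n = _) //; lia.
have [a [wua /walk_len_split[b [wab wbv]]]] := walk_len_split wuv.
have label2 x i j : i < n -> j < n ->
    walk_len e u x i -> walk_len e x v j -> f x = 2.
  move=> ik jk wux wxv; have := distance_labeling_mem x flab.
  rewrite !inE => /orP[/eqP // | /eqP fx].
  by have := geodesic_interior_label flab fu duv ik jk wux wxv; rewrite fx eqxx.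
have fa : f a = 2.
  apply: (label2 a 1 (1 + (n - 2))) wua (walk_len_cat wab wbv); lia.
have fb : f b = 2.
  apply: (label2 b 2 (n - 2)) (walk_len_cat wua wab) wbv; lia.
have eab : e a b by apply/walk_len1.
have ab : a != b by apply: contraTneq eab => ->; rewrite e_irr.
have dab : dist_eq e a b 2 by rewrite -fa; apply: flab.2; rewrite ?fa ?fb.
by have := dist_eq_leq_walk dab wab.
Qed.
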